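(* Let $n\ge1$, and for $j=1,\dots,n$ let $\hat\phi_j\in\mathbb{R}$ and $\tilde\phi_j\ge0$. Let $M\ge3$ be an integer, $\vartheta_m=(2m+1)\pi/M$ for $m\in\mathcal{M}=\{0,1,\dots,M-1\}$, and let $\mathbf{h}_m,\mathbf{g}_m\in\mathbb{R}^n$ have $j$th entries $$[\mathbf{h}_m]_j=\max_{|\epsilon|\le2\tilde\phi_j}\cos(2\hat\phi_j-\vartheta_m+\epsilon),\qquad [\mathbf{g}_m]_j=\frac{[\mathbf{h}_m]_j}{\cos(\pi/M)}.$$ For $\mathbf{y}\in\mathbb{R}^n$ with $\mathbf{y}\succeq\mathbf{0}$ define $$S(\mathbf{y})=\max_{\phi_j\in[\hat\phi_j-\tilde\phi_j,\,\hat\phi_j+\tilde\phi_j],\ j=1,\dots,n}\Big\|\sum_{j=1}^n y_j\,\mathbf{u}(2\phi_j)\Big\|.$$ Then for every $\mathbf{y}\succeq\mathbf{0}$, $$0\le\max_{m\in\mathcal{M}}\mathbf{h}_m^{\mathsf T}\mathbf{y}\le S(\mathbf{y})\le\max_{m\in\mathcal{M}}\mathbf{g}_m^{\mathsf T}\mathbf{y}.$$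
   Context: $\mathbf{u}(\phi)=[\cos\phi\ \ \sin\phi]^{\mathsf T}$; $\|\cdot\|$ is the Euclidean norm; $\mathbf{y}\succeq\mathbf{0}$ means entrywise nonnegative. *)

From HB Require Import structures.
From mathcomp Require Import all_boot all_order all_algebra.
From mathcomp Require Import all_classical all_reals all_analysis.
Set Implicit Arguments. Unset Strict Implicit. Unset Printing Implicit Defensive.
Import Order.TTheory GRing.Theory Num.Theory.
Local Open Scope classical_set_scope.
Local Open Scope ring_scope.

Section Defs.
Variable R : realType.

Definition vartheta (M m : nat) : R := (2 * m + 1)%:R * pi / M%:R.

(* [h_m]_j = max_{|eps| <= 2 phit_j} cos(2 phihat_j - vartheta_m + eps)  (max taken as sup; attained) *)
Definition hvec (n M : nat) (phihat phit : 'I_n -> R) (m : nat) (j : 'I_n) : R :=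
  sup [set cos (2 * phihat j - vartheta M m + e) | e in [set e : R | `|e| <= 2 * phit j]].

Definition gvec (n M : nat) (phihat phit : 'I_n -> R) (m : nat) (j : 'I_n) : R :=
  hvec M phihat phit m j / cos (pi / M%:R).

Definition dotv (n : nat) (a y : 'I_n -> R) : R := \sum_(j < n) a j * y j.

Definition maxM (M : nat) (f : nat -> R) : R := \big[Num.max/f 0%N]_(0 <= m < M) f m.

(* Euclidean norm of sum_j y_j u(2 phi_j), u(t) = [cos t, sin t]^T *)
Definition normsum (n : nat) (y phi : 'I_n -> R) : R :=
  Num.sqrt ((\sum_(j < n) y j * cos (2 * phi j)) ^+ 2 + (\sum_(j < n) y j * sin (2 * phi j)) ^+ 2).

(* S(y) = max over the box of normsum (max taken as sup; attained by compactness) *)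
Definition Sfun (n : nat) (phihat phit : 'I_n -> R) (y : 'I_n -> R) : R :=
  sup [set normsum y phi | phi in
        [set phi : 'I_n -> R | forall j, phihat j - phit j <= phi j <= phihat j + phit j]].

End Defs.

From HB Require Import structures.
From mathcomp Require Import all_boot all_order all_algebra.
From mathcomp Require Import all_classical all_reals all_analysis.
From mathcomp Require Import ring lra.
Set Implicit Arguments. Unset Strict Implicit. Unset Printing Implicit Defensive.
Import Order.TTheory GRing.Theory Num.Theory.
Local Open Scope classical_set_scope.
Local Open Scope ring_scope.

(* Writing sum_j y_j u(2 phi_j) in polar form r u(t), the inner product with
   u(vartheta_m) is r cos(t - vartheta_m) <= r, and since the vartheta_m are
   spaced 2 pi / M apart, some m has |t - vartheta_m| <= pi / M, so the best
   of these inner products is at least r cos(pi / M).  Moreover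
   sum_j y_j cos(2 phi_j - vartheta_m) is maximised over the box, term by
   term, exactly by h_m^T y.  Hence max_m h_m^T y lies between the value of
   r at phihat (nonnegative) and S(y), and S(y) cos(pi / M) <= max_m h_m^T y. *)

Section Trigonometry.
Variable R : realType.

Lemma cos_le_cos_norm (c x : R) : 0 <= c <= pi -> `|x| <= c -> cos c <= cos x.
Proof.
move=> /andP[c0 cpi] xc.
rewrite -[cos x]cos_norm leNgt ltr_cos ?in_itv /= ?c0 ?cpi ?normr_ge0 -?leNgt ?xc //=.
by rewrite (le_trans xc).
Qed.

Lemma cos_pi_div_gt0 (M : nat) : (3 <= M)%N -> 0 < cos ((pi : R) / M%:R).
Proof.
move=> M3; have M0 : (0 : R) < M%:R by rewrite ltr0n (leq_trans _ M3).
apply: cos_gt0_pihalf; apply/andP; split.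
  apply: (lt_le_trans (y := 0)); first by rewrite oppr_lt0 divr_gt0 ?pi_gt0.
  by rewrite divr_ge0 ?pi_ge0 // ltW.
rewrite ltr_pM2l ?pi_gt0 // ltf_pV2 ?posrE // ?ltr0n // ltr_nat.
exact: leq_trans M3.
Qed.

Lemma vartheta_near (M : nat) (t : R) : (1 <= M)%N -> 0 <= t <= pi *+ 2 ->
  exists2 m, (m < M)%N & `|t - vartheta R M m| <= pi / M%:R.
Proof.
move=> M1 /andP[t0 t2].
have M0 : (0 : R) < M%:R by rewrite ltr0n.
have pi2 : 0 < pi *+ 2 :> R by rewrite pmulrn_rgt0 // pi_gt0.
have x0 : 0 <= t * M%:R / (pi *+ 2) by rewrite divr_ge0 // ?mulr_ge0 // ltW.
have /andP[k1 k2] := truncn_itv x0.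
set k := Num.truncn _ in k1 k2.
pose m := minn k M.-1.
(* [m] is the sector [m 2pi/M, (m+1) 2pi/M] containing [t], the last one if [t = 2 pi] *)
have /andP[lo hi] : m%:R * (pi *+ 2) / M%:R <= t <= m.+1%:R * (pi *+ 2) / M%:R.
  rewrite /m; case: (leqP k M.-1) => hk; apply/andP; split.
  - by rewrite ler_pdivrMr // -ler_pdivlMr // mulrAC.
  - by rewrite ler_pdivlMr // -ler_pdivrMr // ltW.
  - rewrite ler_pdivrMr // -ler_pdivlMr //; apply: le_trans k1.
    by rewrite ler_nat ltnW.
  - by rewrite prednK // [M%:R * _]mulrC mulfK ?gt_eqF.
exists m; first by rewrite /m (leq_ltn_trans (geq_minr _ _)) // prednK.
have Mn : M%:R != 0 :> R by rewrite gt_eqF.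
have e1 : m%:R * (pi *+ 2) / M%:R = vartheta R M m - pi / M%:R.
  by rewrite /vartheta natrD natrM; field.
have e2 : m.+1%:R * (pi *+ 2) / M%:R = vartheta R M m + pi / M%:R.
  by rewrite /vartheta natrD natrM -addn1 natrD; field.
rewrite e1 in lo; rewrite e2 in hi.
rewrite ler_norml; apply/andP; split; lra.
Qed.

Lemma polar_angle (a b : R) : 0 < Num.sqrt (a ^+ 2 + b ^+ 2) ->
  exists t, [/\ 0 <= t <= pi *+ 2, cos t = a / Num.sqrt (a ^+ 2 + b ^+ 2)
            & sin t = b / Num.sqrt (a ^+ 2 + b ^+ 2)].
Proof.
set r := Num.sqrt _ => r0.
have rn : r != 0 by rewrite gt_eqF.
have hr2 : r ^+ 2 = a ^+ 2 + b ^+ 2 by rewrite sqr_sqrtr // addr_ge0 // sqr_ge0.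
have hx : -1 <= a / r <= 1.
  rewrite -ler_norml normrM normfV (gtr0_norm r0) ler_pdivrMr // mul1r.
  by rewrite -sqrtr_sqr ler_sqrt ?addr_ge0 ?sqr_ge0 // lerDl sqr_ge0.
have hs : 1 - (a / r) ^+ 2 = (b / r) ^+ 2.
  rewrite !expr_div_n -[1](divff (expf_neq0 2 rn)) -mulrBl hr2; congr (_ / _); ring.
have cA : cos (acos (a / r)) = a / r by rewrite acosK // in_itv.
have sA : sin (acos (a / r)) = `|b| / r.
  by rewrite sin_acos // hs sqrtr_sqr normrM normfV (gtr0_norm r0).
have A0 := acos_ge0 hx; have A1 := acos_lepi hx; have pi0 := pi_ge0 R.
case: (leP 0 b) => hb.
  exists (acos (a / r)); split => //; last by rewrite sA ger0_norm.
  by rewrite A0 /= (le_trans A1) // mulr2n lerDl.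
exists (- acos (a / r) + pi *+ 2); split.
- by apply/andP; split; rewrite mulr2n; lra.
- by rewrite cosD2pi cosN.
- by rewrite sinD2pi sinN sA ltr0_norm // mulNr opprK.
Qed.

Lemma exists_vartheta_sqrt_mul_cos_le (M : nat) (a b : R) : (1 <= M)%N ->
  exists2 m, (m < M)%N & Num.sqrt (a ^+ 2 + b ^+ 2) * cos (pi / M%:R)
     <= a * cos (vartheta R M m) + b * sin (vartheta R M m).
Proof.
move=> M1; have M0 : (0 : R) < M%:R by rewrite ltr0n.
have := sqrtr_ge0 (a ^+ 2 + b ^+ 2); rewrite le_eqVlt => /orP[/eqP r0|r0].
  exists 0%N => //; rewrite -r0 mul0r.
  move/esym/eqP: r0; rewrite sqrtr_eq0 => ab0.
  have /eqP : a ^+ 2 = 0 by apply/eqP; rewrite eq_le sqr_ge0 andbT; nra.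
  have /eqP : b ^+ 2 = 0 by apply/eqP; rewrite eq_le sqr_ge0 andbT; nra.
  by rewrite !expf_eq0 /= => /eqP-> /eqP->; rewrite !mul0r addr0.
have [t [ht ct st]] := polar_angle r0.
have [m mM hm] := vartheta_near M1 ht.
exists m => //; set r := Num.sqrt _ in r0 ct st *.
have -> : a * cos (vartheta R M m) + b * sin (vartheta R M m)
          = r * cos (t - vartheta R M m).
  by rewrite cosB ct st; field; rewrite gt_eqF.
rewrite ler_pM2l // cos_le_cos_norm // divr_ge0 ?pi_ge0 ?(ltW M0) //=.
by rewrite ler_pdivrMr // ler_peMr ?pi_ge0 // ler1n.
Qed.

Lemma mul_cos_add_mul_sin_le_sqrt (a b t : R) :
  a * cos t + b * sin t <= Num.sqrt (a ^+ 2 + b ^+ 2).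
Proof.
apply: (le_trans (ler_norm _)); rewrite -sqrtr_sqr ler_sqrt ?addr_ge0 ?sqr_ge0 //.
have := sqr_ge0 (a * sin t - b * cos t); have := cos2Dsin2 t; nra.
Qed.

End Trigonometry.

Section MaxM.
Variable R : realType.

Lemma le_maxM (M : nat) (f : nat -> R) m : (m < M)%N -> f m <= maxM M f.
Proof. by move=> mM; apply: le_bigmax_seq; rewrite ?mem_index_iota. Qed.

Lemma maxM_le (M : nat) (f : nat -> R) c :
  (forall m, (m < M)%N -> f m <= c) -> f 0%N <= c -> maxM M f <= c.
Proof.
move=> hm h0; rewrite /maxM big_seq; apply: bigmax_le => // i.
by rewrite mem_index_iota => /hm.
Qed.

End MaxM.

Section Bounds.
Variables (R : realType) (n M : nat) (phihat phit y : 'I_n -> R).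
Hypothesis phit_ge0 : forall j, 0 <= phit j.
Hypothesis y_ge0 : forall j, 0 <= y j.

Definition inbox (phi : 'I_n -> R) :=
  forall j, phihat j - phit j <= phi j <= phihat j + phit j.

Definition sum_cos (phi : 'I_n -> R) := \sum_(j < n) y j * cos (2 * phi j).
Definition sum_sin (phi : 'I_n -> R) := \sum_(j < n) y j * sin (2 * phi j).

Lemma inbox_phihat : inbox phihat.
Proof. by move=> j; have phit_j := phit_ge0 j; apply/andP; split; lra. Qed.

Lemma sum_cos_sub (phi : 'I_n -> R) t :
  \sum_(j < n) y j * cos (2 * phi j - t) = sum_cos phi * cos t + sum_sin phi * sin t.
Proof.
rewrite /sum_cos /sum_sin !mulr_suml -big_split; apply: eq_bigr => j _ /=.
by rewrite cosB; ring.
Qed.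

Lemma has_sup_hvec_set m j : has_sup
  [set cos (2 * phihat j - vartheta R M m + e) | e in [set e : R | `|e| <= 2 * phit j]].
Proof.
split; first by exists (cos (2 * phihat j - vartheta R M m + 0)), 0;
  rewrite //= normr0 mulr_ge0.
by exists 1 => x [e _ <-]; exact: cos_le1.
Qed.

Lemma cos_le_hvec m j e : `|e| <= 2 * phit j ->
  cos (2 * phihat j - vartheta R M m + e) <= hvec M phihat phit m j.
Proof. by move=> he; apply: (sup_upper_bound (has_sup_hvec_set m j)); exists e. Qed.

Lemma sum_cos_le_dot_hvec (phi : 'I_n -> R) m : inbox phi ->
  \sum_(j < n) y j * cos (2 * phi j - vartheta R M m) <= dotv (hvec M phihat phit m) y.
Proof.
move=> hb; apply: ler_sum => j _; rewrite mulrC ler_wpM2r //.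
have -> : 2 * phi j - vartheta R M m =
   2 * phihat j - vartheta R M m + 2 * (phi j - phihat j) by ring.
apply: cos_le_hvec; have /andP[h1 h2] := hb j.
by rewrite ler_norml; apply/andP; split; lra.
Qed.

Lemma dot_hvec_le_sum_cos_add m d : 0 < d -> exists2 phi, inbox phi &
  dotv (hvec M phihat phit m) y
    <= \sum_(j < n) y j * cos (2 * phi j - vartheta R M m) + d * \sum_(j < n) y j.
Proof.
move=> d0.
have /choice [e he] : forall j, exists e, `|e| <= 2 * phit j /\
    hvec M phihat phit m j - d < cos (2 * phihat j - vartheta R M m + e).
  by move=> j; have [_ [e he <-] hx] := sup_adherent d0 (has_sup_hvec_set m j); exists e.
exists (fun j => phihat j + e j / 2).
  move=> j; have [+ _] := he j; rewrite ler_norml => /andP[h1 h2].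
  by apply/andP; split; lra.
rewrite /dotv mulr_sumr -big_split; apply: ler_sum => j _ /=.
have -> : 2 * (phihat j + e j / 2) - vartheta R M m
          = 2 * phihat j - vartheta R M m + e j by field.
have [_ h2] := he j; have := y_ge0 j; nra.
Qed.

Lemma has_sup_Sfun_set : has_sup [set normsum y phi | phi in inbox].
Proof.
split; first by exists (normsum y phihat), phihat => //; exact: inbox_phihat.
pose Y := \sum_(j < n) y j.
have bnd (g : 'I_n -> R) : (forall j, `|g j| <= 1) ->
    (\sum_(j < n) y j * g j) ^+ 2 <= Y ^+ 2.
  move=> hg; have : `|\sum_(j < n) y j * g j| <= Y.
    apply: (le_trans (ler_norm_sum _ _ _)); apply: ler_sum => j _.
    by rewrite normrM (ger0_norm (y_ge0 j)) ler_piMr.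
  by rewrite ler_norml => /andP[h1 h2]; nra.
exists (Num.sqrt (Y ^+ 2 *+ 2)) => x [phi _ <-].
rewrite /normsum ler_sqrt ?mulrn_wge0 ?sqr_ge0 // mulr2n.
have := bnd _ (fun j => cos_max (2 * phi j)).
have := bnd _ (fun j => sin_max (2 * phi j)); lra.
Qed.

Lemma normsum_le_Sfun (phi : 'I_n -> R) : inbox phi -> normsum y phi <= Sfun phihat phit y.
Proof. by move=> hb; apply: (sup_upper_bound has_sup_Sfun_set); exists phi. Qed.

Lemma maxM_dot_hvec_ge0 : (3 <= M)%N ->
  0 <= maxM M (fun m => dotv (hvec M phihat phit m) y).
Proof.
move=> M3; have [m mM] := exists_vartheta_sqrt_mul_cos_le (sum_cos phihat) (sum_sin phihat)
  (ltnW (ltnW M3)).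
rewrite -sum_cos_sub => hm.
apply: le_trans (le_maxM _ mM); apply: le_trans (sum_cos_le_dot_hvec _ inbox_phihat).
by apply: le_trans hm; rewrite mulr_ge0 ?sqrtr_ge0 ?ltW ?cos_pi_div_gt0.
Qed.

Lemma maxM_dot_hvec_le_Sfun :
  maxM M (fun m => dotv (hvec M phihat phit m) y) <= Sfun phihat phit y.
Proof.
suff dot_le m : dotv (hvec M phihat phit m) y <= Sfun phihat phit y.
  by apply: maxM_le.
apply/ler_addgt0Pr => eps eps0; pose Y := \sum_(j < n) y j.
have Y0 : 0 <= Y by apply: sumr_ge0.
have [|phi hb approx] := dot_hvec_le_sum_cos_add m (d := eps / (Y + 1)).
  by rewrite divr_gt0 // ltr_wpDl.
apply: (le_trans approx); apply: lerD.
  rewrite sum_cos_sub; apply: le_trans (normsum_le_Sfun hb).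
  exact: mul_cos_add_mul_sin_le_sqrt.
by rewrite mulrAC ler_pdivrMr ?ltr_wpDl // -/Y ler_pM2l // lerDl.
Qed.

Lemma Sfun_le_maxM_dot_gvec : (3 <= M)%N ->
  Sfun phihat phit y <= maxM M (fun m => dotv (gvec M phihat phit m) y).
Proof.
move=> M3; have c0 := @cos_pi_div_gt0 R _ M3.
apply: ge_sup => [|_ [phi hb <-]].
  by exists (normsum y phihat), phihat => //; exact: inbox_phihat.
have [m mM hm] := exists_vartheta_sqrt_mul_cos_le (sum_cos phi) (sum_sin phi) (ltnW (ltnW M3)).
apply: le_trans (le_maxM _ mM).
have -> : dotv (gvec M phihat phit m) y
          = dotv (hvec M phihat phit m) y / cos (pi / M%:R).
  by rewrite /dotv mulr_suml; apply: eq_bigr => j _; rewrite /gvec mulrAC.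
rewrite ler_pdivlMr //; apply: le_trans hm _.
by rewrite -sum_cos_sub; exact: sum_cos_le_dot_hvec.
Qed.

End Bounds.

Theorem lemma2 (R : realType) (n M : nat) (phihat phit : 'I_n -> R)
  (hn : (1 <= n)%N) (hphit : forall j, 0 <= phit j) (hM : (3 <= M)%N)
  (y : 'I_n -> R) (hy : forall j, 0 <= y j) :
  0 <= maxM M (fun m => dotv (hvec M phihat phit m) y) /\
  maxM M (fun m => dotv (hvec M phihat phit m) y) <= Sfun phihat phit y /\
  Sfun phihat phit y <= maxM M (fun m => dotv (gvec M phihat phit m) y).
Proof.
split; first exact: maxM_dot_hvec_ge0.
split; first exact: maxM_dot_hvec_le_Sfun.
exact: Sfun_le_maxM_dot_gvec.
Qed.
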